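(* Let $\ell, c \in \mathbb{N}$. For any directed graphs $G$ and $H$ with nodes $u$ and $v$ respectively, the following holds: $G,u \equiv_{\text{C}^2_{\ell, c}} H,v$ if and only if $W^\ell_c(u) = W^\ell_c(v)$.
   Context: A directed graph of dimension $d$ is $G=(V,E,\lambda)$ with finite node set $V$, edge set $E \subseteq V\times V$ without loops $(v,v)$, and labelling $\lambda: V \to \{0,1\}^d$. The in-neighbourhood $\overleftarrow{N}_G(v)$ is the set of $w$ with $(w,v)\in E$, the out-neighbourhood $\overrightarrow{N}_G(v)$ is the set of $w$ with $(v,w)\in E$, and $N_G(v)=\overleftarrow{N}_G(v)\cup\overrightarrow{N}_G(v)$. Graphs are viewed as first-order structures with unary predicates $P_1,\dots,P_d$ ($P_i$ holds at $v$ iff $\lambda(v)_i=1$) and binary predicate $E$. $\text{C}^2$ is the two-variable fragment of first-order logic with equality extended by counting quantifiers $\exists_k$ (''there exist at least $k$ distinct elements such that''). $\text{C}^2_{\ell,c}$ is the set of $\text{C}^2$ formulas of quantifier depth at most $\ell$ in which every counting quantifier $\exists_k$ has $k \le c$. $G,u \equiv_{\text{C}^2_{\ell,c}} H,v$ means that for every $\text{C}^2_{\ell,c}$ formula $\varphi(x)$ with one free variable, $G\models\varphi(u)$ iff $H\models\varphi(v)$. For a multiset $M$, the $c$-bounded multiset $\{\!\{\cdot\}\!\}^c$ is obtained by reducing every multiplicity to at most $c$ (e.g. $\{\!\{7,7,7,3\}\!\}^2=\{\!\{7,7,3\}\!\}$). The $c$-bounded WL algorithm computes, for all nodes $v$ of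 a graph $G$: $W^0_c(v)=\lambda(v)$ and $W^{\ell+1}_c(v) = \big( W^\ell_c(v),\ \{\!\{ W^\ell_c(w) \}\!\}^c_{w \in \overleftarrow{N}_G(v) \cap \overrightarrow{N}_G(v)},\ \{\!\{ W^\ell_c(w) \}\!\}^c_{w \in \overleftarrow{N}_G(v) \setminus \overrightarrow{N}_G(v)},\ \{\!\{ W^\ell_c(w) \}\!\}^c_{w \in \overrightarrow{N}_G(v) \setminus \overleftarrow{N}_G(v)},\ \{\!\{ W^\ell_c(w) \}\!\}^c_{w \in V \setminus (N_G(v) \cup \{v\})} \big)$. *)

From HB Require Import structures.
From mathcomp Require Import all_boot.
From mathcomp Require Import finmap multiset.

Set Implicit Arguments.
Unset Strict Implicit.
Unset Printing Implicit Defensive.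

Local Open Scope fset_scope.
Local Open Scope mset_scope.
Local Open Scope nat_scope.

Record digraph (d : nat) := Digraph {
  node :> finType;
  edge : rel node;
  edge_irr : irreflexive edge;
  label : node -> d.-tuple bool
}.

Inductive var := VX | VY.

Definition var_eqb (a b : var) : bool :=
  match a, b with VX, VX | VY, VY => true | _, _ => false end.

Inductive C2form (d : nat) :=
| CP   of 'I_d & var
| CE   of var & var
| CEq  of var & var
| CNot of C2form d
| CAnd of C2form d & C2form d
| COr  of C2form d & C2form d
| CEx  of nat & var & C2form d.

Arguments CNot {d}. Arguments CAnd {d}. Arguments COr {d}. Arguments CEx {d}.

Fixpoint qdepth d (f : C2form d) : nat :=
  match f with
  | CP _ _ | CE _ _ | CEq _ _ => 0
  | CNot g => qdepth g
  | CAnd g h | COr g h => maxn (qdepth g) (qdepth h)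
  | CEx _ _ g => (qdepth g).+1
  end.

Fixpoint counts_le d (c : nat) (f : C2form d) : bool :=
  match f with
  | CP _ _ | CE _ _ | CEq _ _ => true
  | CNot g => counts_le c g
  | CAnd g h | COr g h => counts_le c g && counts_le c h
  | CEx k _ g => (k <= c) && counts_le c g
  end.

Fixpoint free_in d (z : var) (f : C2form d) : bool :=
  match f with
  | CP _ a => var_eqb z a
  | CE a b | CEq a b => var_eqb z a || var_eqb z b
  | CNot g => free_in z g
  | CAnd g h | COr g h => free_in z g || free_in z h
  | CEx _ a g => ~~ var_eqb z a && free_in z g
  end.

Definition C2lc_unary d (l c : nat) (f : C2form d) : bool :=
  [&& qdepth f <= l, counts_le c f & ~~ free_in VY f].

Section Sem.
Variables (d : nat) (G : digraph d).

Definition look (a b : G) (z : var) : G := match z with VX => a | VY => b end.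

Fixpoint sat (a b : G) (f : C2form d) {struct f} : bool :=
  match f with
  | CP i z => tnth (label (look a b z)) i
  | CE z z' => edge (look a b z) (look a b z')
  | CEq z z' => look a b z == look a b z'
  | CNot g => ~~ sat a b g
  | CAnd g h => sat a b g && sat a b h
  | COr g h => sat a b g || sat a b h
  | CEx k VX g => k <= #|[pred w : G | sat w b g]|
  | CEx k VY g => k <= #|[pred w : G | sat a w g]|
  end.

(* G |= phi(u) for a formula with free variable x (y is not free, so its
   value is irrelevant; we set it to u). *)
Definition models1 (u : G) (f : C2form d) : bool := sat u u f.
End Sem.

Definition C2_equiv d (l c : nat) (G : digraph d) (u : G) (H : digraph d) (v : H) :=
  forall f : C2form d, C2lc_unary l c f -> (models1 u f <-> models1 v f).

Fixpoint colT (d n : nat) : choiceType :=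
  match n with
  | 0 => (d.-tuple bool : choiceType)
  | n.+1 => ((colT d n * {mset colT d n} * {mset colT d n}
              * {mset colT d n} * {mset colT d n})%type : choiceType)
  end.

Definition bmset (K : choiceType) (c : nat) (s : seq K) : {mset K} :=
  ([fsfun x in [fset x in s] => minn c (count_mem x s)] : {mset K}).

Section WL.
Variables (d c : nat) (G : digraph d).

Definition bmset_of n (W : G -> colT d n) (P : pred G) : {mset colT d n} :=
  bmset c [seq W w | w <- enum P].

Fixpoint wl (n : nat) : G -> colT d n :=
  match n return G -> colT d n with
  | 0 => fun v => label v
  | n.+1 => fun v =>
      (wl n v,
       bmset_of (wl n) [pred w | edge w v && edge v w],
       bmset_of (wl n) [pred w | edge w v && ~~ edge v w],
       bmset_of (wl n) [pred w | edge v w && ~~ edge w v],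
       bmset_of (wl n) [pred w | ~~ edge w v && ~~ edge v w && (w != v)])
  end.
End WL.

From mathcomp Require Import all_boot.
From mathcomp Require Import finmap multiset.
From mathcomp Require Import zify.

Set Implicit Arguments.
Unset Strict Implicit.
Unset Printing Implicit Defensive.
Local Open Scope nat_scope.

(* Soundness: the truth of a
   formula of depth n at a pair (a, b) only depends on the depth-n colours of a
   and b and on their atomic type (equality and the two edge directions).  For
   a counting quantifier, the witnesses split by their atomic type relative to
   the fixed node; in each class their number, capped at c, is read off from
   the c-bounded multiset of colours of that class, and a threshold k <= c
   cannot tell two numbers with the same cap apart.  Completeness: nodes of
   distinct depth-n colours are separated by formulas, whose conjunctions define
   every depth-n colour class by a formula chi(x); if two c-bounded multisets
   of a class t differ at the colour of chi, then
   exists_m y (atype(y, x) = t /\ chi(y)) separates the nodes for the larger of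
   the two capped counts m. *)

Lemma minn_sum (I : Type) c (r : seq I) (P : pred I) (F : I -> nat) :
  minn c (\sum_(i <- r | P i) F i) = minn c (\sum_(i <- r | P i) minn c (F i)).
Proof.
elim: r => [|i r IHr]; rewrite ?big_nil ?big_cons //.
by case: (P i) => //; lia.
Qed.

Lemma leq_capped c k m n : k <= c -> minn c m = minn c n -> (k <= m) = (k <= n).
Proof. by move=> kc E; apply/idP/idP; lia. Qed.

Lemma count_undupE (T : eqType) (P : pred T) (s : seq T) :
  count P s = \sum_(x <- undup s | P x) count_mem x s.
Proof.
rewrite -sum1_count -big_undup_iterop_count.
by apply: eq_bigr => x _; rewrite Monoid.iteropE iter_addn_0 mul1n.
Qed.

Lemma count_enum (T : finType) (A p : pred T) :
  count p (enum A) = #|[pred x | A x && p x]|.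
Proof. by rewrite -sum1_count big_enum_cond sum1_card. Qed.

Section BoundedMultiset.
Variables (K : choiceType) (c : nat).
Implicit Types s : seq K.

Lemma bmsetE s x : bmset c s x = minn c (count_mem x s).
Proof.
by rewrite fsfunE inE; case: ifPn => // /count_memPn ->; rewrite minn0.
Qed.

Lemma eq_bmset s1 s2 :
  bmset c s1 = bmset c s2 <-> forall x, minn c (count_mem x s1) = minn c (count_mem x s2).
Proof.
split=> [E x|E]; first by rewrite -!bmsetE E.
by apply/fsfunP => x; rewrite !bmsetE.
Qed.

Lemma bmset_mem s1 s2 : 0 < c -> bmset c s1 = bmset c s2 -> s1 =i s2.
Proof.
move=> c_gt0 /eq_bmset E x; move: (E x).
by rewrite -!has_pred1 !has_count; lia.
Qed.

Lemma bmset_count s1 s2 (P : pred K) :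
  bmset c s1 = bmset c s2 -> minn c (count P s1) = minn c (count P s2).
Proof.
have [->|c_gt0 E] := posnP c; first by rewrite !min0n.
rewrite !count_undupE minn_sum [RHS]minn_sum.
rewrite (perm_big _ (perm_undup (bmset_mem c_gt0 E))).
by congr minn; apply: eq_bigr => x _; move/eq_bmset: E => ->.
Qed.

Lemma bmset_neq s1 s2 : bmset c s1 <> bmset c s2 ->
  exists2 x, x \in s1 ++ s2 & minn c (count_mem x s1) != minn c (count_mem x s2).
Proof.
move=> neq; apply/hasP; apply: contra_notT neq => /hasPn E.
apply/eq_bmset => x; have [/E/negPn/eqP //|] := boolP (x \in s1 ++ s2).
by rewrite mem_cat negb_or => /andP[/count_memPn -> /count_memPn ->].
Qed.

Lemma bmset_map_count (T1 T2 : eqType) (W1 : T1 -> K) (W2 : T2 -> K)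
    (s1 : seq T1) (s2 : seq T2) (p1 : pred T1) (p2 : pred T2) :
  bmset c (map W1 s1) = bmset c (map W2 s2) ->
  {in s1 & s2, forall x y, W1 x = W2 y -> p1 x = p2 y} ->
  minn c (count p1 s1) = minn c (count p2 s2).
Proof.
have [->|c_gt0 E p12] := posnP c; first by rewrite !min0n.
(* For c > 0 both sequences realise the same colours, so p1 and p2 factor
   through the single colour predicate P below. *)
have match12 x : x \in s1 -> exists2 y, y \in s2 & W1 x = W2 y.
  by move=> xs; apply/mapP; rewrite -(bmset_mem c_gt0 E) map_f.
have match21 y : y \in s2 -> exists2 x, x \in s1 & W1 x = W2 y.
  move=> ys; have /mapP[x xs ->] : W2 y \in map W1 s1.
    by rewrite (bmset_mem c_gt0 E) map_f.
  by exists x.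
pose P k := has (fun x => (W1 x == k) && p1 x) s1.
have P1 : {in s1, forall x, P (W1 x) = p1 x}.
  move=> x xs; have [y ys Exy] := match12 x xs.
  apply/idP/idP => [/hasP[x' x's /andP[/eqP Ex' p1x']]|p1x].
    by rewrite (p12 x y) // -(p12 x' y) // Ex'.
  by apply/hasP; exists x; rewrite ?eqxx.
have P2 : {in s2, forall y, P (W2 y) = p2 y}.
  by move=> y ys; have [x xs Exy] := match21 y ys; rewrite -Exy P1 // (p12 x y).
rewrite -(eq_in_count P1) -(eq_in_count P2) -!count_map.
exact: bmset_count.
Qed.

End BoundedMultiset.

Section C2Syntax.
Variable d : nat.
Implicit Types (G : digraph d) (f g : C2form d).

Definition swap_var (z : var) : var := if z is VX then VY else VX.

Fixpoint swapf f : C2form d :=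
  match f with
  | CP i z => CP i (swap_var z)
  | CE z z' => CE d (swap_var z) (swap_var z')
  | CEq z z' => CEq d (swap_var z) (swap_var z')
  | CNot g => CNot (swapf g)
  | CAnd g h => CAnd (swapf g) (swapf h)
  | COr g h => COr (swapf g) (swapf h)
  | CEx k z g => CEx k (swap_var z) (swapf g)
  end.

Lemma sat_swapf G (a b : G) f : sat a b (swapf f) = sat b a f.
Proof.
elim: f a b => [i z|z z'|z z'|g IHg|g IHg h IHh|g IHg h IHh|k z g IHg] a b /=.
- by case: z.
- by case: z; case: z'.
- by case: z; case: z'.
- by rewrite IHg.
- by rewrite IHg IHh.
- by rewrite IHg IHh.
- by case: z => /=; congr (_ <= _); apply: eq_card => w; rewrite !inE IHg.
Qed.

Lemma qdepth_swapf f : qdepth (swapf f) = qdepth f.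
Proof. by elim: f => //= [g -> h -> | g -> h -> | k z g ->]. Qed.

Lemma counts_le_swapf c f : counts_le c (swapf f) = counts_le c f.
Proof. by elim: f => //= [g -> h -> | g -> h -> | k z g ->]. Qed.

Lemma sat_notin_VY G (a b b' : G) f : ~~ free_in VY f -> sat a b f = sat a b' f.
Proof.
elim: f a b b' => [i z|z z'|z z'|g IHg|g IHg h IHh|g IHg h IHh|k z g IHg] a b b' /=.
- by case: z.
- by case: z; case: z'.
- by case: z; case: z'.
- by move=> fg; rewrite (IHg a b b').
- by rewrite negb_or => /andP[fg fh]; rewrite (IHg a b b') ?(IHh a b b').
- by rewrite negb_or => /andP[fg fh]; rewrite (IHg a b b') ?(IHh a b b').
- by case: z => //= fg; congr (_ <= _); apply: eq_card => w; rewrite !inE (IHg w b b').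
Qed.

Definition CTrue : C2form d := CEq d VX VX.

Definition lit (q : bool) f : C2form d := if q then f else CNot f.

Lemma sat_lit G (a b : G) q f : sat a b (lit q f) = (sat a b f == q).
Proof. by case: q => /=; [rewrite eqb_id | rewrite eqbF_neg]. Qed.

Lemma C2lc_unary_lit l c q f : C2lc_unary l c (lit q f) = C2lc_unary l c f.
Proof. by case: q. Qed.

Lemma C2lc_unary_and l c f g :
  C2lc_unary l c (CAnd f g) = C2lc_unary l c f && C2lc_unary l c g.
Proof.
rewrite /C2lc_unary /= geq_max negb_or.
by case: (qdepth f <= l); case: (counts_le c f); case: (free_in VY f); rewrite /= ?andbF.
Qed.

Lemma C2lc_unary_succ l c f : C2lc_unary l c f -> C2lc_unary l.+1 c f.
Proof. by case/and3P => df cf yf; apply/and3P; split => //; apply: leqW. Qed.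

End C2Syntax.

Section WLColours.
Variables (d c : nat).
Implicit Types G H : digraph d.

Definition atype G (a b : G) : bool * bool * bool := (a == b, edge a b, edge b a).

Lemma atype_refl G (a : G) : atype a a = (true, false, false).
Proof. by rewrite /atype eqxx edge_irr. Qed.

Lemma atype_flip G H (a b : G) (a' b' : H) :
  atype a b = atype a' b' -> atype b a = atype b' a'.
Proof. by rewrite /atype eq_sym [b' == _]eq_sym => -[-> -> ->]. Qed.

Definition wl_class G n (v : G) (t : bool * bool * bool) :=
  bmset_of c (wl c n) [pred w | atype w v == t].

Lemma eq_bmset_of G n (W : G -> colT d n) (P Q : pred G) :
  P =i Q -> bmset_of c W P = bmset_of c W Q.
Proof. by move=> PQ; rewrite /bmset_of (eq_enum PQ). Qed.

Lemma wl_succE G n (v : G) :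
  wl c n.+1 v = (wl c n v, wl_class n v (false, true, true), wl_class n v (false, true, false),
                 wl_class n v (false, false, true), wl_class n v (false, false, false)).
Proof.
by congr (_, _, _, _, _); apply: eq_bmset_of => w; rewrite !inE /atype;
  case: (eqVneq w v) => [->|_]; rewrite ?edge_irr //=; case: (edge w v); case: (edge v w).
Qed.

Lemma wl_class_self G n (v : G) e1 e2 :
  wl_class n v (true, e1, e2) = bmset c (if e1 || e2 then [::] else [:: wl c n v]).
Proof.
have self w : (atype w v == (true, e1, e2)) = (w == v) && ~~ (e1 || e2).
  by rewrite /atype; case: (eqVneq w v) => [->|]; rewrite ?edge_irr //; case: e1 e2 => [] [].
rewrite /wl_class /bmset_of; case: ifP => e12.
  by rewrite (eq_enum (_ : _ =i pred0)) ?enum0 // => w; rewrite !inE self e12 andbF.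
by rewrite (eq_enum (_ : _ =i pred1 v)) ?enum1 // => w; rewrite !inE self e12 andbT.
Qed.

Lemma wl_succ_eq G H n (v : G) (v' : H) : wl c n.+1 v = wl c n.+1 v' ->
  wl c n v = wl c n v' /\ forall t, wl_class n v t = wl_class n v' t.
Proof.
rewrite !wl_succE => -[E0 E1 E2 E3 E4]; split=> // -[[[] [] []]] //;
  by rewrite !wl_class_self E0.
Qed.

Lemma wl_label G H n (v : G) (v' : H) : wl c n v = wl c n v' -> label v = label v'.
Proof. by elim: n => [//|n IHn] /wl_succ_eq[/IHn]. Qed.

Lemma card_by_atype G (b : G) (p : pred G) :
  #|p| = \sum_(t : bool * bool * bool) count p (enum [pred w | atype w b == t]).
Proof.
rewrite -sum1_card (partition_big (fun w => atype w b) predT) //.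
by apply: eq_bigr => t _; rewrite count_enum -sum1_card; apply: eq_bigl => w; rewrite andbC.
Qed.

Lemma wl_capped_card G H n (b : G) (b' : H) (p : pred G) (p' : pred H) :
  wl c n.+1 b = wl c n.+1 b' ->
  (forall w w', wl c n w = wl c n w' -> atype w b = atype w' b' -> p w = p' w') ->
  minn c #|p| = minn c #|p'|.
Proof.
case/wl_succ_eq => _ Eb pp'.
rewrite (card_by_atype b) (card_by_atype b') minn_sum [RHS]minn_sum.
congr minn; apply: eq_bigr => t _; apply: bmset_map_count; first exact: Eb.
by move=> w w'; rewrite !mem_enum !inE => /eqP wt /eqP w't Ew; apply: pp'; rewrite ?wt ?w't.
Qed.

Lemma sat_wl G H n (f : C2form d) (a b : G) (a' b' : H) :
  qdepth f <= n -> counts_le c f -> wl c n a = wl c n a' -> wl c n b = wl c n b' ->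
  atype a b = atype a' b' -> sat a b f = sat a' b' f.
Proof.
elim: f n a b a' b' => [i z|z z'|z z'|g IHg|g IHg h IHh|g IHg h IHh|k z g IHg] n a b a' b' /=.
- by move=> _ _ /wl_label Ea /wl_label Eb _; case: z; rewrite /= ?Ea ?Eb.
- by move=> _ _ _ _ [_ Eab Eba]; case: z; case: z'; rewrite /= ?edge_irr.
- by move=> _ _ _ _ [Eab _ _]; case: z; case: z'; rewrite /= ?eqxx // eq_sym Eab eq_sym.
- by move=> *; rewrite (IHg n a b a' b').
- rewrite geq_max => /andP[dg dh] /andP[cg ch] *.
  by rewrite (IHg n a b a' b') ?(IHh n a b a' b').
- rewrite geq_max => /andP[dg dh] /andP[cg ch] *.
  by rewrite (IHg n a b a' b') ?(IHh n a b a' b').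
case: n => [//|n]; rewrite ltnS => dg /andP[kc cg] Ea Eb Eab.
have [Ea0 _] := wl_succ_eq Ea; have [Eb0 _] := wl_succ_eq Eb.
case: z => /=; apply: leq_capped kc _.
- by apply: (wl_capped_card Eb) => w w' Ew Ewb; apply: (IHg n).
- apply: (wl_capped_card Ea) => w w' Ew Ewa; apply: (IHg n) => //.
  exact: atype_flip.
Qed.

Lemma models1_wl G H n (f : C2form d) (a : G) (a' : H) :
  qdepth f <= n -> counts_le c f -> wl c n a = wl c n a' -> models1 a f = models1 a' f.
Proof. by move=> df cf Ea; apply: (sat_wl df cf Ea Ea); rewrite !atype_refl. Qed.

Definition atype_form (t : bool * bool * bool) : C2form d :=
  let: (q, e1, e2) := t in
  CAnd (lit q (CEq d VY VX)) (CAnd (lit e1 (CE d VY VX)) (lit e2 (CE d VX VY))).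

Lemma sat_atype_form G (a w : G) t : sat a w (atype_form t) = (atype w a == t).
Proof. by case: t => [[q e1] e2]; rewrite /= !sat_lit /atype !xpair_eqE andbA. Qed.

Definition count_formula k t (chi : C2form d) : C2form d :=
  CEx k VY (CAnd (atype_form t) (swapf chi)).

Lemma C2lc_unary_count_formula n k t chi :
  k <= c -> C2lc_unary n c chi -> C2lc_unary n.+1 c (count_formula k t chi).
Proof.
move=> kc /and3P[dchi cchi _]; case: t => [[q e1] e2].
rewrite /C2lc_unary /= qdepth_swapf counts_le_swapf kc cchi andbT.
by case: q; case: e1; case: e2; rewrite /= !max0n ltnS dchi.
Qed.

Lemma models1_count_formula G (a : G) k t chi : ~~ free_in VY chi ->
  models1 a (count_formula k t chi) =
  (k <= count (fun w => models1 w chi) (enum [pred w | atype w a == t])).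
Proof.
move=> ychi; rewrite count_enum /models1 /=; congr (_ <= _); apply: eq_card => w.
by rewrite !inE sat_atype_form sat_swapf (sat_notin_VY _ a w ychi).
Qed.

Definition distinguishable n G H (x : G) (y : H) :=
  exists2 f, C2lc_unary n c f & models1 x f && ~~ models1 y f.

Lemma distinguishable_sym n G H (x : G) (y : H) :
  distinguishable n x y -> distinguishable n y x.
Proof. by case=> f uf xyf; exists (CNot f); rewrite /models1 //= negbK andbC. Qed.

Lemma distinguishable_succ n G H (x : G) (y : H) :
  distinguishable n x y -> distinguishable n.+1 x y.
Proof. by case=> f /C2lc_unary_succ; exists f. Qed.

Section Completeness.
Variable n : nat.
Hypothesis wl_distinguishable_n : forall G H (x : G) (y : H),
  wl c n x <> wl c n y -> distinguishable n x y.

Lemma wl_separating_formula G0 (x0 : G0) G : exists2 chi, C2lc_unary n c chi &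
  models1 x0 chi /\ forall z : G, models1 z chi -> wl c n z = wl c n x0.
Proof.
suff [chi uchi [x0chi chiP]] : exists2 chi, C2lc_unary n c chi &
    models1 x0 chi /\ forall z : G, z \in enum G -> models1 z chi -> wl c n z = wl c n x0.
  by exists chi => //; split=> // z; apply: chiP; rewrite mem_enum.
elim: (enum G) => [|z s [chi uchi [x0chi chiP]]].
  by exists (CTrue d); rewrite // /models1 /= eqxx.
have [Ez|nEz] := eqVneq (wl c n z) (wl c n x0).
  by exists chi => //; split=> // z'; rewrite inE => /orP[/eqP ->|]; last exact: chiP.
have [f uf /andP[x0f zf]] : distinguishable n x0 z.
  by apply: wl_distinguishable_n; apply/eqP; rewrite eq_sym.
exists (CAnd f chi); first by rewrite C2lc_unary_and uf uchi.
split=> [|z']; first by rewrite /models1 /= -!/(models1 _ _) x0f x0chi.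
rewrite inE /models1 /= -!/(models1 _ _) => /orP[/eqP ->|z's /andP[_]]; last exact: chiP.
by rewrite (negbTE zf).
Qed.

Lemma wl_char_formula G0 (x0 : G0) G H : exists2 chi, C2lc_unary n c chi &
  (forall z : G, models1 z chi = (wl c n z == wl c n x0)) /\
  (forall z : H, models1 z chi = (wl c n z == wl c n x0)).
Proof.
have [chiG uG [x0G PG]] := wl_separating_formula x0 G.
have [chiH uH [x0H PH]] := wl_separating_formula x0 H.
have uchi : C2lc_unary n c (CAnd chiG chiH) by rewrite C2lc_unary_and uG uH.
have x0_chi (K : digraph d) (z : K) : wl c n z = wl c n x0 -> models1 z (CAnd chiG chiH).
  case/and3P: uchi => dchi cchi _ Ez.
  by rewrite (models1_wl dchi cchi Ez) /models1 /= -!/(models1 _ _) x0G x0H.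
exists (CAnd chiG chiH) => //.
by split=> z; apply/idP/eqP => [/andP[]|/x0_chi //]; [move=> /PG | move=> _ /PH].
Qed.

Lemma wl_class_distinguishable G H (x : G) (y : H) t :
  wl_class n x t <> wl_class n y t -> distinguishable n.+1 x y.
Proof.
rewrite /wl_class /bmset_of; set s1 := map _ _; set s2 := map _ _.
suff key G0 (x0 : G0) :
    minn c (count_mem (wl c n x0) s1) != minn c (count_mem (wl c n x0) s2) ->
    distinguishable n.+1 x y.
  by case/bmset_neq => k; rewrite mem_cat => /orP[]/mapP[x0 _ ->]; apply: key.
have [chi uchi [chiG chiH]] := wl_char_formula x0 G H.
have count_chi (K : digraph d) (a : K) k :
    (forall z : K, models1 z chi = (wl c n z == wl c n x0)) ->
    models1 a (count_formula k t chi) =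
    (k <= count_mem (wl c n x0) (map (wl c n) (enum [pred w | atype w a == t]))).
  move=> chiK; rewrite models1_count_formula; last by case/and3P: uchi.
  by rewrite count_map; congr (_ <= _); apply: eq_count => w; rewrite /= chiK.
have ucount k : k <= c -> C2lc_unary n.+1 c (count_formula k t chi).
  by move=> kc; apply: C2lc_unary_count_formula.
case: ltngtP => [lt|gt|//] _.
- apply: distinguishable_sym; exists (count_formula (minn c (count_mem (wl c n x0) s2)) t chi).
    exact/ucount/geq_minl.
  by rewrite (count_chi _ _ _ chiG) (count_chi _ _ _ chiH) -/s1 -/s2; lia.
- exists (count_formula (minn c (count_mem (wl c n x0) s1)) t chi); first exact/ucount/geq_minl.
  by rewrite (count_chi _ _ _ chiG) (count_chi _ _ _ chiH) -/s1 -/s2; lia.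
Qed.

End Completeness.

Lemma wl_neq_distinguishable n G H (x : G) (y : H) :
  wl c n x <> wl c n y -> distinguishable n x y.
Proof.
elim: n G H x y => [|n IHn] G H x y neq.
  have [i neq_i] : exists i, tnth (label x) i != tnth (label y) i.
    apply/existsP; apply: contra_notT neq => /existsPn E.
    by apply: eq_from_tnth => i; apply/eqP/negPn/E.
  exists (lit (tnth (label x) i) (CP i VX)); first by rewrite C2lc_unary_lit.
  by rewrite /models1 !sat_lit /= eqxx eq_sym.
have [E0|neq0] := eqVneq (wl c n x) (wl c n y); last exact/distinguishable_succ/IHn/eqP.
have [t neq_t] : exists t, wl_class n x t != wl_class n y t.
  apply/existsP; apply: contra_notT neq => /existsPn E.
  by rewrite !wl_succE E0; congr (_, _, _, _, _); apply/eqP/negPn/E.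
by apply: (wl_class_distinguishable IHn (t := t)); apply/eqP.
Qed.

End WLColours.

Theorem theorem1 (d l c : nat) (G H : digraph d) (u : G) (v : H) :
  C2_equiv l c u v <-> wl c l u = wl c l v.
Proof.
split=> [equiv|E f /and3P[df cf _]]; last by rewrite (models1_wl df cf E).
have [//|/eqP/wl_neq_distinguishable[f uf /andP[uf' vf]]] := eqVneq (wl c l u) (wl c l v).
by have := (equiv f uf).1 uf'; rewrite (negbTE vf).
Qed.
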